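(* Let $\mathbf{k}$ be an arbitrary field and $\sigma\subset N_{\mathbb{Q}}$ a nonzero strongly convex polyhedral cone. Every nontrivial homogeneous LFIHD $\partial$ on $\mathbf{k}[\sigma^\vee\cap M]$ is of the following form: there are a Demazure root $e$ of $\sigma$ with distinguished ray $\rho$ and $\lambda\in\mathbf{k}^*$ such that for all $i\in\mathbb{N}$ and $m\in\sigma^\vee\cap M$, $\partial^{(i)}(\chi^m)=\lambda^i\binom{\langle m,\rho\rangle}{i}\chi^{m+ie}$ (with $\binom{a}{b}=0$ for $a<b$). Conversely, each such pair $(e,\lambda)$ defines a nontrivial homogeneous LFIHD of degree $e$.
   Context: An LFIHD on a $\mathbf{k}$-algebra $A$ is a sequence $(\partial^{(i)})_{i\in\mathbb{N}}$ of $\mathbf{k}$-linear maps with $\partial^{(0)}=\mathrm{id}$, the Leibniz rule $\partial^{(i)}(fg)=\sum_{j=0}^i\partial^{(j)}(f)\partial^{(i-j)}(g)$, local finiteness (for each $f$, $\partial^{(i)}(f)=0$ for $i\gg0$), and iterativity $\partial^{(i)}\circ\partial^{(j)}=\binom{i+j}{i}\partial^{(i+j)}$; it corresponds to a $\mathbb{G}_a$-action on $\operatorname{Spec}A$. It is trivial if all $\partial^{(i)}$, $i>0$, vanish. For $M$-graded $A$, it is homogeneous of degree $e\in M$ if $\partial^{(i)}(A_m)\subset A_{m+ie}$. A Demazure root of $\sigma$ is $e\in M$ with a ray $\rho$ of $\sigma$ (identified with its primitive vector) such that $\langle e,\rho\rangle=-1$ and $\langle e,\rho'\rangle\ge0$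 for all other rays $\rho'$; $\rho$ is the distinguished ray. *)

From HB Require Import structures.
From mathcomp Require Import all_boot all_order all_algebra.
Set Implicit Arguments. Unset Strict Implicit. Unset Printing Implicit Defensive.
Import Order.TTheory GRing.Theory Num.Theory.
Local Open Scope ring_scope.

(* M = N = Z^n, elements are integer row vectors; <m, r> is the standard pairing. *)
Definition pairing (n : nat) (m r : 'rV[int]_n) : int :=
  \sum_(j < n) m ord0 j * r ord0 j.

(* r is a primitive lattice vector (in particular r <> 0). *)
Definition primitive (n : nat) (r : 'rV[int]_n) : Prop :=
  forall (d : nat) (w : 'rV[int]_n), r = w *+ d -> d = 1%N.

(* v lies in the rational cone generated by gens: d v = sum c_g g with d > 0,
   c_g >= 0 integers (equivalently, v is a nonnegative rational combination). *)
Definition in_cone (n : nat) (gens : seq 'rV[int]_n) (v : 'rV[int]_n) : Prop :=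
  exists (d : nat) (c : 'rV[int]_n -> nat),
    (0 < d)%N /\ v *+ d = \sum_(g <- gens) g *+ c g.

(* [rays] is the list of primitive ray generators of a nonzero strongly convex
   rational polyhedral cone sigma = cone(rays) in N_Q: nonempty, duplicate free,
   primitive, each ray extremal (not in the cone of the others), and sigma is
   strongly convex (no nontrivial nonnegative relation among the rays). *)
Definition cone_rays (n : nat) (rays : seq 'rV[int]_n) : Prop :=
  [/\ uniq rays, rays != [::],
      forall r, r \in rays -> primitive r,
      forall r, r \in rays -> ~ in_cone (rem r rays) r
    & forall c : 'rV[int]_n -> nat,
        \sum_(g <- rays) g *+ c g = 0 -> forall g, g \in rays -> c g = 0%N].

Definition dual_pt (n : nat) (rays : seq 'rV[int]_n) (m : 'rV[int]_n) : bool :=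
  all (fun r => 0 <= pairing m r) rays.

Definition demazure_root (n : nat) (rays : seq 'rV[int]_n) (e rho : 'rV[int]_n) : Prop :=
  [/\ rho \in rays, pairing e rho = -1
    & forall r, r \in rays -> r != rho -> 0 <= pairing e r].

(* (A, chi) is the semigroup algebra k[sigma^vee \cap M]: chi m = chi^m for
   m in S := sigma^vee \cap M form a k-basis of A and chi is multiplicative. *)
Definition semigroup_algebra (k : fieldType) (A : comAlgType k) (n : nat)
    (rays : seq 'rV[int]_n) (chi : 'rV[int]_n -> A) : Prop :=
  [/\ chi 0 = 1,
      forall m m', dual_pt rays m -> dual_pt rays m' -> chi (m + m') = chi m * chi m',
      forall x : A, exists (s : seq 'rV[int]_n) (c : 'rV[int]_n -> k),
        all (dual_pt rays) s /\ x = \sum_(m <- s) c m *: chi m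
    & forall (s : seq 'rV[int]_n) (c : 'rV[int]_n -> k),
        uniq s -> all (dual_pt rays) s -> \sum_(m <- s) c m *: chi m = 0 ->
        forall m, m \in s -> c m = 0].

Definition LFIHD (k : fieldType) (A : comAlgType k) (D : nat -> A -> A) : Prop :=
  [/\ forall i (a : k) (x y : A), D i (a *: x + y) = a *: D i x + D i y,
      forall x, D 0%N x = x,
      forall i (f g : A), D i (f * g) = \sum_(j < i.+1) D j f * D (i - j)%N g,
      forall f, exists N : nat, forall i, (N <= i)%N -> D i f = 0
    & forall i j f, D i (D j f) = D (i + j)%N f *+ 'C(i + j, i)].

Definition nontrivial_HD (k : fieldType) (A : comAlgType k) (D : nat -> A -> A) : Prop :=
  exists i f, (0 < i)%N /\ D i f != 0.

Definition graded_piece (k : fieldType) (A : comAlgType k) (n : nat)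
    (rays : seq 'rV[int]_n) (chi : 'rV[int]_n -> A) (m : 'rV[int]_n) (x : A) : Prop :=
  if dual_pt rays m then exists c : k, x = c *: chi m else x = 0.

Definition homogeneous (k : fieldType) (A : comAlgType k) (n : nat)
    (rays : seq 'rV[int]_n) (chi : 'rV[int]_n -> A) (D : nat -> A -> A)
    (e : 'rV[int]_n) : Prop :=
  forall i m x, graded_piece rays chi m x -> graded_piece rays chi (m + e *+ i) (D i x).

(* A homogeneous LFIHD D of degree e acts on the basis by
   D_i chi^m = a_i(m) chi^(m + i e).  By Leibniz's rule the generating
   polynomials F_m(X) = sum_i a_i(m) X^i are multiplicative in m, so
   deg(m) := deg F_m is a monoid morphism sigma^vee \cap M -> N, and by
   iterativity m + deg(m) e has degree 0.  A purely convex-geometric argument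
   (section DegreeFunction) shows that such a nonzero "degree function" forces
   e to be a Demazure root with distinguished ray rho and deg = <., rho>;
   comparing with a point m1 with <m1, rho> = 1 gives F_m = (1 + lam X)^<m,rho>.

   Converse.  The formula on the basis is extended linearly; Leibniz's rule
   reduces to Vandermonde's identity and iterativity to a product formula for
   binomial coefficients. *)

From HB Require Import structures.
From mathcomp Require Import all_boot all_order all_algebra.
From mathcomp Require Import ring lra zify.
From Stdlib Require Import ClassicalEpsilon.
Set Implicit Arguments. Unset Strict Implicit. Unset Printing Implicit Defensive.
Import Order.TTheory GRing.Theory Num.Theory.
Local Open Scope ring_scope.

Lemma interval_choice (P N : finType) (L : P -> rat) (R : N -> rat) :
  (forall p q, L p < R q) -> exists t, (forall p, L p < t) /\ (forall q, t < R q).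
Proof.
move=> LR.
have [lo [Llo loR]] : exists lo, (forall p, L p <= lo) /\ (forall q, lo < R q).
  case: (pickP (@predT P)) => [p0 _|P0].
    have [p _ Lmax] := @arg_maxP _ _ P p0 predT L isT.
    by exists (L p); split=> [p'|q]; [exact: Lmax | exact: LR].
  case: (pickP (@predT N)) => [q0 _|N0].
    have [q _ Rmin] := @arg_minP _ _ N q0 predT R isT.
    exists (R q - 1); split=> [p|q']; first by have := P0 p.
    have := Rmin q' isT; lra.
  by exists 0; split=> [p|q]; [have := P0 p | have := N0 q].
have [hi [lohi hiR]] : exists hi, (lo < hi) /\ (forall q, hi <= R q).
  case: (pickP (@predT N)) => [q0 _|N0].
    have [q _ Rmin] := @arg_minP _ _ N q0 predT R isT.
    by exists (R q); split=> [|q']; [exact: loR | exact: Rmin].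
  by exists (lo + 1); split=> [|q]; [lra | have := N0 q].
exists ((lo + hi) / 2); split=> [p|q]; [have := Llo p | have := hiR q]; lra.
Qed.

Lemma sum_fiber (I J : finType) (g : J -> I) (f : J -> int) (h : I -> int) :
  \sum_i (\sum_(x | g x == i) f x) * h i = \sum_x f x * h (g x).
Proof.
under eq_bigr do rewrite big_distrl big_mkcond /=.
rewrite exchange_big /=; apply: eq_bigr => x _.
rewrite -big_mkcond /= (eq_bigl (fun i => i == g x)) => [|i]; last by rewrite eq_sym.
by rewrite big_pred1_eq.
Qed.

Definition pos_free (I : finType) (n : nat) (v : I -> nat -> int) : Prop :=
  forall c : I -> int, (forall i, 0 <= c i) ->
    (forall j, (j < n)%N -> \sum_i c i * v i j = 0) -> forall i, c i = 0.

(* Gordan's alternative is proved by Fourier-Motzkin elimination of the last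
   coordinate n: the vectors with v i n = 0 are kept, and every pair (p, q) with
   v p n > 0 > v q n is replaced by the positive combination of v p and v q
   that kills coordinate n. *)
Section FourierMotzkin.
Variables (I : finType) (n : nat) (v : I -> nat -> int).

Definition fm_zero := {i : I | v i n == 0}.
Definition fm_pos := {i : I | 0 < v i n}.
Definition fm_neg := {i : I | v i n < 0}.

Definition fm_vec (x : (fm_zero + fm_pos * fm_neg)%type) (j : nat) : int :=
  match x with
  | inl z => v (val z) j
  | inr pq => (- v (val pq.2) n) * v (val pq.1) j + v (val pq.1) n * v (val pq.2) j
  end.

Lemma fm_pos_gt0 (p : fm_pos) : 0 < v (val p) n. Proof. exact: valP p. Qed.
Lemma fm_neg_gt0 (q : fm_neg) : 0 < - v (val q) n.
Proof. by rewrite oppr_gt0; exact: valP q. Qed.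

(* A nonnegative relation among the eliminated vectors pulls back to one among
   the original vectors, so freeness is inherited. *)
Lemma fm_pos_free : pos_free n.+1 v -> pos_free n fm_vec.
Proof.
move=> vfree c' c'ge0 rel'.
pose cZ i := \sum_(z : fm_zero | val z == i) c' (inl z).
pose cP i := \sum_(pq : fm_pos * fm_neg | val pq.1 == i) c' (inr pq) * (- v (val pq.2) n).
pose cN i := \sum_(pq : fm_pos * fm_neg | val pq.2 == i) c' (inr pq) * v (val pq.1) n.
have cZ_ge0 i : 0 <= cZ i by apply: sumr_ge0.
have cP_ge0 i : 0 <= cP i.
  by apply: sumr_ge0 => pq _; rewrite mulr_ge0 // ltW // fm_neg_gt0.
have cN_ge0 i : 0 <= cN i.
  by apply: sumr_ge0 => pq _; rewrite mulr_ge0 // ltW // fm_pos_gt0.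
pose c i := cZ i + cP i + cN i.
have c_rel j : \sum_i c i * v i j = \sum_x c' x * fm_vec x j.
  under eq_bigr do rewrite !mulrDl.
  rewrite !big_split /= !sum_fiber big_sumType /= -addrA -big_split /=.
  congr (_ + _); apply: eq_bigr => pq _.
  by rewrite mulrDr !mulrA [c' _ * _ * _]mulrAC.
have c0 : forall i, c i = 0.
  apply: vfree => [i|j]; first by rewrite !addr_ge0.
  rewrite ltnS leq_eqVlt => /orP [/eqP -> | jn]; last by rewrite c_rel rel'.
  rewrite c_rel big_sumType /= [X in X + _]big1 ?add0r => [|z _].
    by apply: big1 => pq _; rewrite mulNr [v (val pq.1) n * _]mulrC addNr mulr0.
  by rewrite (eqP (valP z)) mulr0.
have [cZ0 cP0] : (forall i, cZ i = 0) /\ (forall i, cP i = 0).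
  by split=> i; have := c0 i; have := cZ_ge0 i; have := cP_ge0 i;
     have := cN_ge0 i; rewrite /c; lra.
case=> [z | pq].
  exact: (psumr_eq0P (fun _ _ => c'ge0 _) (cZ0 (val z)) (eqxx _)).
have := psumr_eq0P _ (cP0 (val pq.1)) (eqxx _).
move=> /(_ (fun pq' _ => mulr_ge0 (c'ge0 _) (ltW (fm_neg_gt0 _)))) /eqP.
by rewrite mulf_eq0 (negbTE (lt0r_neq0 (fm_neg_gt0 _))) orbF => /eqP.
Qed.

(* Conversely a functional positive on the eliminated vectors extends, by a
   suitable rational (then cleared to integral) last coordinate, to one that is
   positive on the original vectors. *)
Lemma fm_lift (u' : nat -> int) :
  (forall x, 0 < \sum_(j < n) u' j * fm_vec x j) ->
  exists u : nat -> int, forall i, 0 < \sum_(j < n.+1) u j * v i j.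
Proof.
move=> u'pos.
pose a i := \sum_(j < n) u' j * v i j.
have a_zero (z : fm_zero) : 0 < a (val z) by have := u'pos (inl z).
have a_pair (p : fm_pos) (q : fm_neg) :
    0 < (- v (val q) n) * a (val p) + v (val p) n * a (val q).
  have := u'pos (inr (p, q)); rewrite /a /= !big_distrr -big_split /=.
  by congr (0 < _); apply: eq_bigr => j _; rewrite mulrDr;
    congr (_ + _); rewrite !mulrA; congr (_ * _); rewrite mulrC.
pose L (p : fm_pos) : rat := - (a (val p))%:~R / (v (val p) n)%:~R.
pose R (q : fm_neg) : rat := (a (val q))%:~R / (- v (val q) n)%:~R.
have [t [Lt tR]] : exists t, (forall p, L p < t) /\ (forall q, t < R q).
  apply: interval_choice => p q.
  have hp : (0 : rat) < (v (val p) n)%:~R by rewrite ltr0z fm_pos_gt0.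
  have hq : (0 : rat) < (- v (val q) n)%:~R by rewrite ltr0z fm_neg_gt0.
  rewrite /L /R ltr_pdivrMr // mulrAC ltr_pdivlMr //.
  have := a_pair p q; rewrite -(ltr0z rat) rmorphD /= !rmorphM /= !rmorphN /=; lra.
pose K := denq t.
have K_gt0 : (0 : rat) < K%:~R by rewrite ltr0z denq_gt0.
have tK : (numq t)%:~R = t * K%:~R :> rat by rewrite -[t in RHS]divq_num_den mulfVK ?gt_eqF.
exists (fun j => if (j < n)%N then K * u' j else numq t) => i.
rewrite big_ord_recr /= ltnn.
have -> : \sum_(j < n) (if (widen_ord (leqnSn n) j < n)%N
      then K * u' (widen_ord (leqnSn n) j) else numq t) * v i (widen_ord (leqnSn n) j)
    = K * a i by rewrite /a big_distrr; apply: eq_bigr => j _ /=; rewrite ltn_ord mulrA.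
rewrite -(ltr0z rat) rmorphD /= !rmorphM /= tK.
have -> : K%:~R * (a i)%:~R + t * K%:~R * (v i n)%:~R
    = K%:~R * ((a i)%:~R + t * (v i n)%:~R) :> rat by ring.
rewrite pmulr_rgt0 //.
case: (ltrgtP (v i n) 0) => vin.
- have := tR (exist _ i vin); rewrite /R.
  have hq : (0 : rat) < (- v i n)%:~R by rewrite ltr0z oppr_gt0.
  rewrite ltr_pdivlMr // rmorphN /= mulrN; lra.
- have := Lt (exist _ i vin); rewrite /L.
  have hp : (0 : rat) < (v i n)%:~R by rewrite ltr0z.
  rewrite ltr_pdivrMr //; lra.
- by rewrite vin mulr0 addr0 ltr0z; exact: a_zero (exist _ i (introT eqP vin)).
Qed.

End FourierMotzkin.

Lemma gordan (n : nat) (I : finType) (v : I -> nat -> int) :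
  pos_free n v -> exists u : nat -> int, forall i, 0 < \sum_(j < n) u j * v i j.
Proof.
elim: n I v => [|n IH] I v vfree.
  exists (fun _ => 0) => i.
  have := vfree (fun _ => 1) (fun _ => ler01) (fun j (j0 : (j < 0)%N) => False_ind _ (notF j0)) i.
  by move/eqP; rewrite oner_eq0.
have [u' u'pos] := IH _ _ (fm_pos_free vfree).
exact: fm_lift u'pos.
Qed.

Section Pairing.
Variable n : nat.
Implicit Types (m r : 'rV[int]_n) (rays : seq 'rV[int]_n).

Lemma pairingDl m m' r : pairing (m + m') r = pairing m r + pairing m' r.
Proof. by rewrite /pairing -big_split; apply: eq_bigr => j _; rewrite mxE mulrDl. Qed.

Lemma pairingZl (a : int) m r : pairing (a *: m) r = a * pairing m r.
Proof. by rewrite /pairing big_distrr; apply: eq_bigr => j _ /=; rewrite !mxE mulrA. Qed.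

Lemma pairingNl m r : pairing (- m) r = - pairing m r.
Proof. by rewrite -scaleN1r pairingZl mulN1r. Qed.

Lemma pairingBl m m' r : pairing (m - m') r = pairing m r - pairing m' r.
Proof. by rewrite pairingDl pairingNl. Qed.

Lemma pairingMnl m r (N : nat) : pairing (m *+ N) r = pairing m r *+ N.
Proof. by rewrite -scaler_nat pairingZl mulr_natl. Qed.

Lemma pairingNr m r : pairing m (- r) = - pairing m r.
Proof. by rewrite /pairing -sumrN; apply: eq_bigr => j _; rewrite mxE mulrN. Qed.

Lemma pairing_delta r (j : 'I_n) : pairing (delta_mx 0 j) r = r 0 j.
Proof.
rewrite /pairing (bigD1 j) //= mxE !eqxx mul1r big1 ?addr0 // => j' /negbTE.
by rewrite mxE eq_sym => ->; rewrite andbF mul0r.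
Qed.

Lemma dual_ptD rays m m' : dual_pt rays m -> dual_pt rays m' -> dual_pt rays (m + m').
Proof.
by move=> /allP mS /allP m'S; apply/allP => r rin /=; rewrite pairingDl addr_ge0 ?mS ?m'S.
Qed.

Lemma dual_pt0 rays : dual_pt rays 0.
Proof. by apply/allP => r _ /=; rewrite -(scale0r 0) pairingZl mul0r. Qed.

Lemma dual_ptMn rays m N : dual_pt rays m -> dual_pt rays (m *+ N).
Proof.
by move=> mS; elim: N => [|N IH]; rewrite ?mulr0n ?dual_pt0 // mulrS dual_ptD.
Qed.

End Pairing.

Lemma positive_functional n (vs : seq 'rV[int]_n) : uniq vs ->
  (forall c : 'rV[int]_n -> nat, \sum_(g <- vs) g *+ c g = 0 ->
     forall g, g \in vs -> c g = 0%N) ->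
  exists u : 'rV[int]_n, forall g, g \in vs -> 0 < pairing u g.
Proof.
move=> uvs vsfree.
pose v (i : 'I_(size vs)) (j : nat) : int :=
  if insub j is Some j' then (nth 0 vs i) 0 j' else 0.
have [u upos] : exists u : nat -> int, forall i, 0 < \sum_(j < n) u j * v i j.
  apply: gordan => c cge0 crel.
  pose cn (g : 'rV[int]_n) : nat := absz (\sum_(i : 'I_(size vs) | nth 0 vs i == g) c i).
  have cnE (i : 'I_(size vs)) : cn (nth 0 vs i) = `|c i|%N.
    rewrite /cn (eq_bigl (fun i' => i' == i)) ?big_pred1_eq // => i'.
    by rewrite nth_uniq.
  have : \sum_(g <- vs) g *+ cn g = 0.
    rewrite (big_nth 0) big_mkord; apply/matrixP => a b; rewrite ord1 summxE [RHS]mxE.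
    rewrite -[RHS](crel b (ltn_ord b)); apply: eq_bigr => i _.
    by rewrite cnE -scaler_nat mxE natz gez0_abs // /v valK.
  move=> /vsfree cn0 i; apply/eqP; rewrite -absz_eq0; apply/eqP.
  by rewrite -cnE cn0 // mem_nth.
exists (\row_j u j) => g gin.
have := upos (Ordinal (etrans (index_mem g vs) gin)).
by congr (0 < _); apply: eq_bigr => j _; rewrite mxE /v valK /= nth_index.
Qed.

Section ConeGeometry.
Variables (n : nat) (rays : seq 'rV[int]_n).
Hypothesis cr : cone_rays rays.

Lemma cone_positive_functional : exists u, forall g, g \in rays -> 0 < pairing u g.
Proof. by case: cr => ur _ _ _ sc; exact: positive_functional ur sc. Qed.

Lemma sum_indicator (T : eqType) (V : nmodType) (s : seq T) (f : T -> V) (x : T) :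
  x \in s -> uniq s -> \sum_(g <- s) f g *+ (g == x) = f x.
Proof.
move=> xs us; rewrite (bigD1_seq x) //= eqxx mulr1n big1 ?addr0 // => g.
by move/negbTE ->.
Qed.

(* Replacing a ray r by -r keeps the family positively free: a relation
   involving -r would put r in the cone of the other rays, contradicting
   extremality; one not involving it contradicts strong convexity. *)
Lemma flipped_rays_free r : r \in rays ->
  uniq (- r :: rem r rays) /\
  (forall c : 'rV[int]_n -> nat, \sum_(g <- - r :: rem r rays) g *+ c g = 0 ->
     forall g, g \in - r :: rem r rays -> c g = 0%N).
Proof.
move=> rin; case: cr => ur _ _ ext sc.
have Nr : - r \notin rays.
  apply/negP => Nrin; have := sc (fun g => ((g == r) + (g == - r))%N).
  under eq_bigr do rewrite mulrnDr.
  by rewrite big_split /= !sum_indicator // addrN => /(_ erefl r rin); rewrite eqxx.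
split; first by rewrite /= rem_uniq // andbT; apply: contra Nr; exact: mem_rem.
move=> c; rewrite big_cons => crel.
case cNr: (c (- r)) => [|N]; last first.
  exfalso; apply: (ext r rin); exists N.+1, c; split => //.
  by move: crel; rewrite cNr mulNrn addrC => /eqP; rewrite subr_eq0 => /eqP ->.
move: crel; rewrite cNr mulr0n add0r => crel.
pose c' g := if g == r then 0%N else c g.
have c'0 : forall g, g \in rays -> c' g = 0%N.
  apply: sc; rewrite (perm_big _ (perm_to_rem rin)) big_cons /= /c' eqxx mulr0n add0r.
  rewrite -[RHS]crel; apply: eq_big_seq => g.
  by rewrite (mem_rem_uniq _ ur) => /andP [/negbTE -> _].
move=> g; rewrite in_cons => /orP [/eqP -> // | gin].
have := c'0 g (mem_rem gin); rewrite /c'.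
by move: gin; rewrite (mem_rem_uniq _ ur) => /andP [/negbTE -> _].
Qed.

Lemma face_functional r : r \in rays ->
  exists w, pairing w r = 0 /\ forall g, g \in rays -> g != r -> 0 < pairing w g.
Proof.
move=> rin; have [ur _ _ _ _] := cr.
have [u upos] := cone_positive_functional.
have [u' u'pos] := let: conj ufl fl := flipped_rays_free rin in positive_functional ufl fl.
have u'r : pairing u' r < 0 by have := u'pos (- r) (mem_head _ _); rewrite pairingNr oppr_gt0.
exists ((- pairing u' r) *: u + (pairing u r) *: u'); split.
  by rewrite pairingDl !pairingZl mulNr mulrC addNr.
move=> g gin gr; rewrite pairingDl !pairingZl.
apply: addr_gt0; apply: mulr_gt0; rewrite ?oppr_gt0 ?upos //.
by apply: u'pos; rewrite in_cons (mem_rem_uniq _ ur) inE gr gin orbT.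
Qed.

Lemma face_functional_dual r w : r \in rays -> pairing w r = 0 ->
  (forall g, g \in rays -> g != r -> 0 < pairing w g) -> dual_pt rays w.
Proof.
move=> rin wr wpos; apply/allP => g gin /=.
by case: (g =P r) => [-> | /eqP gr]; [rewrite wr | exact: ltW (wpos g gin gr)].
Qed.

Lemma shift_into_dual rho x w :
  (forall g, g \in rays -> g != rho -> 0 < pairing w g) -> 0 <= pairing w rho ->
  0 <= pairing x rho -> exists N, dual_pt rays (x + w *+ N).
Proof.
move=> wpos wrho xrho; have [ur _ _ _ _] := cr.
exists (\sum_(g <- rays) `|pairing x g|)%N; apply/allP => g gin /=.
rewrite pairingDl pairingMnl -mulr_natr natz.
have xg : (`|pairing x g| <= \sum_(g <- rays) `|pairing x g|)%N.
  by rewrite (bigD1_seq g) //= leq_addr.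
case: (g =P rho) => [-> | /eqP ne]; first by rewrite addr_ge0 // mulr_ge0.
have := wpos g gin ne; move: xg.
set N := (\sum_(g <- rays) `|pairing x g|)%N => xg wg; nia.
Qed.

Lemma big_gcdz_dvd (I : eqType) (s : seq I) (F : I -> int) x :
  x \in s -> (\big[gcdz/0]_(i <- s) F i %| F x)%Z.
Proof.
elim: s => // y s IH; rewrite in_cons big_cons => /orP [/eqP -> | xs].
  exact: dvdz_gcdl.
exact: dvdz_trans (dvdz_gcdr _ _) (IH xs).
Qed.

(* A primitive vector is unimodular: some functional takes the value 1 on it
   (the gcd of its entries is a combination of them, and divides them all). *)
Lemma primitive_unimodular (r : 'rV[int]_n) : primitive r -> exists v, pairing v r = 1.
Proof.
move=> prim; set G := \big[gcdz/0]_(j <- index_enum 'I_n) r 0 j.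
have [v vG] : exists v, pairing v r = G.
  apply: (big_ind (fun x => exists v, pairing v r = x)).
  - by exists 0; rewrite -(scale0r 0) pairingZl mul0r.
  - move=> x y [vx <-] [vy <-].
    have [a [b <-]] := Bezoutz (pairing vx r) (pairing vy r).
    by exists (a *: vx + b *: vy); rewrite pairingDl !pairingZl.
  - by move=> j _; exists (delta_mx 0 j); rewrite pairing_delta.
have G_ge0 : 0 <= G by rewrite /G; case: index_enum => [|j s]; rewrite ?big_nil ?big_cons.
have G1 : `|G|%N = 1%N.
  apply: (prim _ (\row_j (r ord0 j %/ G)%Z)); apply/matrixP => a j.
  rewrite ord1 -scaler_nat mxE mxE natz gez0_abs // mulrC divzK //.
  by apply: big_gcdz_dvd; rewrite mem_index_enum.
by exists v; rewrite vG -[G]gez0_abs // G1.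
Qed.

Lemma dual_pt_pairing_one rho : rho \in rays ->
  exists m1, dual_pt rays m1 /\ pairing m1 rho = 1.
Proof.
move=> rin; have [_ _ prim _ _] := cr.
have [v vrho] := primitive_unimodular (prim _ rin).
have [w [wrho wpos]] := face_functional rin.
have [N vwS] : exists N, dual_pt rays (v + w *+ N).
  by apply: (shift_into_dual wpos); rewrite ?wrho ?vrho.
by exists (v + w *+ N); rewrite pairingDl pairingMnl wrho mul0rn addr0.
Qed.

End ConeGeometry.

(* This is the combinatorial core of the forward
   direction: deg m will be the degree of the derivation on chi^m. *)
Section DegreeFunction.
Variables (n : nat) (rays : seq 'rV[int]_n) (e : 'rV[int]_n) (deg : 'rV[int]_n -> nat).
Hypothesis cr : cone_rays rays.
Hypothesis degD : forall m m', dual_pt rays m -> dual_pt rays m' ->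
  deg (m + m') = (deg m + deg m')%N.
Hypothesis degK : forall m, dual_pt rays m ->
  dual_pt rays (m + e *+ deg m) /\ deg (m + e *+ deg m) = 0%N.
Hypothesis deg_nt : exists m0, dual_pt rays m0 /\ (0 < deg m0)%N.

Lemma deg0 : deg 0 = 0%N.
Proof.
have := degD (dual_pt0 rays) (dual_pt0 rays); rewrite addr0 => /eqP.
by rewrite -{1}[deg 0]addn0 eqn_add2l => /eqP.
Qed.

Lemma degMn m N : dual_pt rays m -> deg (m *+ N) = (N * deg m)%N.
Proof.
move=> mS; elim: N => [|N IH]; first by rewrite mulr0n deg0.
by rewrite mulrS degD ?dual_ptMn // IH mulSn.
Qed.

(* e cannot lie in sigma^vee, so it is negative on some ray. *)
Lemma degree_negative_ray : exists2 rho, rho \in rays & pairing e rho < 0.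
Proof.
have [m0 [m0S m0p]] := deg_nt.
case: (boolP (has (fun r => pairing e r < 0) rays)) => [/hasP [r rin h]|/hasPn eS].
  by exists r.
have eS' : dual_pt rays e by apply/allP => r rin /=; rewrite leNgt eS.
have [_] := degK m0S; rewrite degD ?dual_ptMn // degMn // => /eqP.
by rewrite addn_eq0 (negbTE (lt0n_neq0 m0p)).
Qed.

Section NegativeRay.
Variable rho : 'rV[int]_n.
Hypotheses (rin : rho \in rays) (erho : pairing e rho < 0).

(* If <m, rho> = 0, shifting by a positive multiple of e would leave sigma^vee. *)
Lemma deg_of_pairing0 m : dual_pt rays m -> pairing m rho = 0 -> deg m = 0%N.
Proof.
move=> mS mrho; have [/allP shiftS _] := degK mS.
have := shiftS rho rin; rewrite /= pairingDl pairingMnl mrho add0r -mulr_natr natz.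
move=> h; apply/eqP; apply: contraT => dn.
have : 0 < (deg m)%:Z by rewrite ltz_nat lt0n.
nia.
Qed.

Lemma face_point_dual : exists w, [/\ dual_pt rays w, pairing w rho = 0, deg w = 0%N
  & forall g, g \in rays -> g != rho -> 0 < pairing w g].
Proof.
have [w [wrho wpos]] := face_functional cr rin.
have wS := face_functional_dual rin wrho wpos.
by exists w; split => //; exact: deg_of_pairing0.
Qed.

(* Conversely deg m = 0 forces <m, rho> = 0: otherwise every y in sigma^vee is
   a summand of some N m + (face point), hence of degree 0, against deg_nt. *)
Lemma pairing0_of_deg m : dual_pt rays m -> deg m = 0%N -> pairing m rho = 0.
Proof.
move=> mS dm; have [ur _ _ _ _] := cr.
have [w [wS wrho dw wpos]] := face_point_dual.
have [m0 [m0S]] := deg_nt; apply: contraTeq => mr; rewrite -leqNgt leqn0.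
have mrp : 0 < pairing m rho by rewrite lt_neqAle eq_sym mr (allP mS rho rin).
have m0r : 0 <= pairing m0 rho by exact: (allP m0S rho rin).
have [N HN] : exists N, dual_pt rays ((m *+ `|pairing m0 rho| - m0) + w *+ N).
  apply: (shift_into_dual cr wpos); first by rewrite wrho.
  by rewrite pairingBl pairingMnl -mulr_natr natz gez0_abs //; nia.
have := degD HN m0S.
rewrite addrAC subrK degD ?dual_ptMn // !degMn // dm dw !muln0.
by move=> /esym /eqP; rewrite addn_eq0 => /andP [_ /eqP ->].
Qed.

(* Applying pairing0_of_deg to m + deg(m) e: deg m * <e, rho> = - <m, rho>. *)
Lemma pairing_deg m : dual_pt rays m -> pairing m rho = (deg m)%:Z * (- pairing e rho).
Proof.
move=> mS; have [xS x0] := degK mS.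
have := pairing0_of_deg xS x0; rewrite pairingDl pairingMnl -mulr_natr natz => h.
by rewrite mulrN; apply/eqP; rewrite -addr_eq0 mulrC h.
Qed.

(* Evaluating at a point of pairing 1 with rho gives <e, rho> = -1. *)
Lemma pairing_e_rho : pairing e rho = -1.
Proof.
have [m1 [m1S m1r]] := dual_pt_pairing_one cr rin.
have := pairing_deg m1S; rewrite m1r.
have : 0 <= (deg m1)%:Z by [].
move: erho; generalize (pairing e rho) ((deg m1)%:Z) => c d ce d0 h.
have d1 : 1 <= d by nia.
nia.
Qed.

End NegativeRay.

(* Main result of the section: e is a Demazure root whose distinguished ray
   rho computes the degree; <e, r> >= 0 on another ray r is seen by shifting
   the face point of r, which has degree <., rho> > 0. *)
Lemma degree_function_root : exists rho, demazure_root rays e rho /\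
  (forall m, dual_pt rays m -> pairing m rho = (deg m)%:Z).
Proof.
have [rho rin erho] := degree_negative_ray.
have pair_deg m : dual_pt rays m -> pairing m rho = (deg m)%:Z.
  by move=> mS; rewrite pairing_deg // pairing_e_rho // opprK mulr1.
exists rho; split => //; split => //; first exact: pairing_e_rho.
move=> r rin' ne.
have [wr [wr0 wrpos]] := face_functional cr rin'.
have wrS := face_functional_dual rin' wr0 wrpos.
have wrr : 0 < pairing wr rho by apply: wrpos; rewrite // eq_sym.
have [/allP shiftS _] := degK wrS.
have := shiftS r rin'; rewrite /= pairingDl pairingMnl wr0 add0r -mulr_natr natz.
have := pair_deg _ wrS; nia.
Qed.

End DegreeFunction.

Section SemigroupAlgebra.
Variables (k : fieldType) (n : nat) (rays : seq 'rV[int]_n) (A : comAlgType k)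
  (chi : 'rV[int]_n -> A).
Hypothesis SA : semigroup_algebra rays chi.

Lemma scale_chi_eq0 m (a : k) : dual_pt rays m -> a *: chi m = 0 -> a = 0.
Proof.
case: SA => _ _ _ indep mS h.
have := indep [:: m] (fun _ => a) isT; rewrite /= mS big_seq1.
by move=> /(_ isT h m (mem_head _ _)).
Qed.

Lemma scale_chi_inj m (a b : k) : dual_pt rays m -> a *: chi m = b *: chi m -> a = b.
Proof.
move=> mS h; apply/eqP; rewrite -subr_eq0; apply/eqP; apply: (scale_chi_eq0 mS).
by rewrite scalerBl h subrr.
Qed.

End SemigroupAlgebra.

Section LinearHD.
Variables (k : fieldType) (A : comAlgType k) (D : nat -> A -> A).
Hypothesis HD : LFIHD D.

Lemma HD0 i : D i 0 = 0.
Proof.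
case: HD => lin _ _ _ _; have := lin i 1 0 0; rewrite !scale1r addr0 => h.
by apply: (@addrI _ (D i 0)); rewrite -h addr0.
Qed.

Lemma HDZ i a x : D i (a *: x) = a *: D i x.
Proof. by case: HD => lin _ _ _ _; have := lin i a x 0; rewrite !addr0 HD0 addr0. Qed.

Lemma HDsum i (T : Type) (s : seq T) (c : T -> k) (f : T -> A) :
  D i (\sum_(m <- s) c m *: f m) = \sum_(m <- s) c m *: D i (f m).
Proof.
case: HD => lin _ _ _ _; elim: s => [|x s IH]; first by rewrite !big_nil HD0.
by rewrite !big_cons lin IH.
Qed.

End LinearHD.

Section Forward.
Variables (k : fieldType) (n : nat) (rays : seq 'rV[int]_n) (A : comAlgType k)
  (chi : 'rV[int]_n -> A).
Hypothesis cr : cone_rays rays.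
Hypothesis SA : semigroup_algebra rays chi.
Variable D : nat -> A -> A.
Hypothesis HD : LFIHD D.
Variable e : 'rV[int]_n.
Hypothesis He : homogeneous rays chi D e.

Local Notation S := (dual_pt rays).

Lemma hcoef_ex i m : exists c : k, (S m -> D i (chi m) = c *: chi (m + e *+ i)) /\
  (c != 0 -> S m /\ S (m + e *+ i)).
Proof.
case: (boolP (S m)) => mS; last by exists 0; split => //; rewrite eqxx.
have : graded_piece rays chi m (chi m) by rewrite /graded_piece mS; exists 1; rewrite scale1r.
move=> /(He i); rewrite /graded_piece.
case: (boolP (S (m + e *+ i))) => [shiftS [c ->] | _ ->]; first by exists c.
by exists 0; rewrite scale0r eqxx.
Qed.

(* a_i(m), taken to be 0 outside the support of the grading. *)
Definition hcoef i m : k := proj1_sig (constructive_indefinite_description _ (hcoef_ex i m)).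

Lemma hcoefE i m : S m -> D i (chi m) = hcoef i m *: chi (m + e *+ i).
Proof. exact: (proj1 (proj2_sig (constructive_indefinite_description _ (hcoef_ex i m)))). Qed.

Lemma hcoef_support i m : hcoef i m != 0 -> S m /\ S (m + e *+ i).
Proof. exact: (proj2 (proj2_sig (constructive_indefinite_description _ (hcoef_ex i m)))). Qed.

Lemma hcoef0 m : S m -> hcoef 0 m = 1.
Proof.
move=> mS; case: (HD) => _ HD_0 _ _ _.
have := hcoefE 0 mS; rewrite HD_0 mulr0n addr0 => h.
by apply: esym; apply: (scale_chi_inj SA mS); rewrite scale1r.
Qed.

Lemma hcoef_lf m : exists N, forall i, (N <= i)%N -> hcoef i m = 0.
Proof.
case: (boolP (S m)) => mS; last first.
  by exists 0%N => i _; apply/eqP; apply: contraT => /hcoef_support [h _]; rewrite h in mS.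
case: (HD) => _ _ _ lfin _; have [N HN] := lfin (chi m).
exists N => i iN; apply/eqP; apply: contraT => nz.
have [_ shiftS] := hcoef_support nz.
by move: (HN i iN); rewrite hcoefE // => /(scale_chi_eq0 SA shiftS) /eqP; rewrite (negbTE nz).
Qed.

Definition hcoef_bound m : nat := proj1_sig (constructive_indefinite_description _ (hcoef_lf m)).

Definition genpoly m : {poly k} := \poly_(i < hcoef_bound m) hcoef i m.

Lemma genpolyE m i : (genpoly m)`_i = hcoef i m.
Proof.
rewrite coef_poly; case: ifP => // /negbT; rewrite -leqNgt => iN.
by rewrite (proj2_sig (constructive_indefinite_description _ (hcoef_lf m)) i iN).
Qed.

(* Leibniz's rule on basis elements, with a vanishing coefficient whenever one
   of the shifted exponents leaves sigma^vee. *)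
Lemma hcoefD i m m' : S m -> S m' ->
  hcoef i (m + m') = \sum_(j < i.+1) hcoef j m * hcoef (i - j) m'.
Proof.
move=> mS m'S; have [_ chiM _ _] := SA.
have shift_add (j : 'I_i.+1) : m + e *+ j + (m' + e *+ (i - j)) = m + m' + e *+ i.
  by rewrite addrACA -mulrnDr subnKC // -ltnS ltn_ord.
have nz_support (j : 'I_i.+1) : hcoef j m * hcoef (i - j) m' != 0 ->
    S (m + e *+ j) /\ S (m' + e *+ (i - j)).
  move=> nz; have [nz1 nz2] : hcoef j m != 0 /\ hcoef (i - j) m' != 0.
    by split; apply: contraNneq nz => ->; rewrite ?mul0r ?mulr0.
  by have [_ ?] := hcoef_support nz1; have [_ ?] := hcoef_support nz2.
case: (boolP (S (m + m' + e *+ i))) => shiftS; last first.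
  rewrite big1 => [|j _]; apply/eqP; apply: contraT.
    by move/hcoef_support => [_]; rewrite (negbTE shiftS).
  by move/nz_support => [h1 h2]; move: (dual_ptD h1 h2); rewrite shift_add (negbTE shiftS).
apply: (scale_chi_inj SA shiftS); rewrite -hcoefE ?dual_ptD //.
case: (HD) => _ _ leibniz _ _.
rewrite chiM // leibniz scaler_suml; apply: eq_bigr => j _.
rewrite !hcoefE // -scalerAl -scalerAr scalerA.
have [->|/nz_support [h1 h2]] := eqVneq (hcoef j m * hcoef (i - j) m') 0.
  by rewrite !scale0r.
by rewrite -chiM // shift_add.
Qed.

Lemma genpolyM m m' : S m -> S m' -> genpoly (m + m') = genpoly m * genpoly m'.
Proof.
move=> mS m'S; apply/polyP => i.
by rewrite coefM genpolyE hcoefD //; apply: eq_bigr => j _; rewrite !genpolyE.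
Qed.

Lemma genpoly_neq0 m : S m -> genpoly m != 0.
Proof.
move=> mS; apply/eqP => F0; have := genpolyE m 0; rewrite F0 coef0 hcoef0 // => /eqP.
by rewrite eq_sym oner_eq0.
Qed.

Definition hdeg m : nat := (size (genpoly m)).-1.

Lemma hdegD m m' : S m -> S m' -> hdeg (m + m') = (hdeg m + hdeg m')%N.
Proof.
move=> mS m'S; rewrite /hdeg genpolyM // size_mul ?genpoly_neq0 //.
move: (genpoly_neq0 mS) (genpoly_neq0 m'S); rewrite -!size_poly_gt0.
by case: (size (genpoly m)) => // a _; case: (size (genpoly m')) => // b _; rewrite addSn addnS.
Qed.

Lemma hdeg_lead m : S m -> hcoef (hdeg m) m != 0.
Proof. by move=> mS; rewrite -genpolyE -lead_coefE lead_coef_eq0 genpoly_neq0. Qed.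

Lemma hcoef_gt_hdeg m i : S m -> (hdeg m < i)%N -> hcoef i m = 0.
Proof.
move=> mS hi; rewrite -genpolyE nth_default //.
by move: (genpoly_neq0 mS) hi; rewrite -size_poly_gt0 /hdeg; case: (size (genpoly m)).
Qed.

(* Iterativity: D i D_(deg m) chi^m is a multiple of D_(i + deg m) chi^m = 0,
   while its leading factor a_(deg m)(m) is nonzero, so m + deg(m) e has
   degree 0. *)
Lemma hdeg_shift m : S m -> S (m + e *+ hdeg m) /\ hdeg (m + e *+ hdeg m) = 0%N.
Proof.
move=> mS; have [_ xS] := hcoef_support (hdeg_lead mS); split => //.
set x := m + e *+ hdeg m.
suff : (size (genpoly x) <= 1)%N by rewrite /hdeg; case: (size _) => [|[]].
apply/leq_sizeP => i i_gt0; rewrite genpolyE; apply/eqP; apply: contraT => nz.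
have [_ h2] := hcoef_support nz.
case: (HD) => _ _ _ _ iter.
have := iter i (hdeg m) (chi m).
rewrite (hcoefE (i + hdeg m) mS) (@hcoef_gt_hdeg _ (i + hdeg m)) //; last by lia.
rewrite scale0r mul0rn hcoefE // (HDZ HD) hcoefE // scalerA => /(scale_chi_eq0 SA h2) /eqP.
by rewrite mulf_eq0 (negbTE (hdeg_lead mS)) (negbTE nz).
Qed.

Lemma hdeg_nontrivial : nontrivial_HD D -> exists m0, S m0 /\ (0 < hdeg m0)%N.
Proof.
case=> i [f [ip nz]]; have [_ _ span _] := SA; have [s [c [sS fE]]] := span f.
case: (boolP (has (fun m => 0 < hdeg m)%N s)) => [/hasP [m ms h]|/hasPn h].
  by exists m; split => //; exact: (allP sS m ms).
move: nz; rewrite fE (HDsum HD) big1_seq ?eqxx // => m /= ms.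
have mS := allP sS m ms.
rewrite hcoefE // hcoef_gt_hdeg ?scale0r ?scaler0 //.
by move: (h m ms); rewrite -leqNgt leqn0 => /eqP ->.
Qed.

Lemma genpoly_deg0 x : S x -> hdeg x = 0%N -> genpoly x = 1.
Proof.
move=> xS d0; apply/polyP => i; rewrite genpolyE coef1.
by case: i => [|i]; rewrite ?hcoef0 // hcoef_gt_hdeg // d0.
Qed.

Lemma genpolyMn m N : S m -> genpoly (m *+ N) = genpoly m ^+ N.
Proof.
move=> mS; elim: N => [|N IH].
  by rewrite mulr0n expr0 genpoly_deg0 ?dual_pt0 ?(deg0 hdegD).
by rewrite mulrS genpolyM ?dual_ptMn // IH exprS.
Qed.

Lemma coef_binomial (lam : k) a i : ((1 + lam%:P * 'X) ^+ a)`_i = lam ^+ i * ('C(a, i))%:R.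
Proof.
elim: a i => [|a IH] i.
  by rewrite expr0 coef1; case: i => [|i]; rewrite ?expr0 ?mul1r // bin0n mulr0.
rewrite exprS mulrDl mul1r coefD -mulrA coefCM coefXM IH.
case: i => [|i]; first by rewrite !expr0 !bin0 mulr0 addr0.
by rewrite /= IH binS natrD mulrDr exprS; ring.
Qed.

(* Forward direction of the theorem, for a fixed degree e: every m in
   sigma^vee satisfies F_m = (1 + lam X)^<m,rho> with lam = a_1(m1). *)
Theorem homogeneous_LFIHD_form : nontrivial_HD D -> exists rho (lam : k),
  [/\ demazure_root rays e rho, lam != 0
    & forall (i : nat) (m : 'rV[int]_n), S m ->
        D i (chi m) = (lam ^+ i * ('C(absz (pairing m rho), i))%:R) *: chi (m + e *+ i)].
Proof.
move=> Dnt.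
have [rho [root pair_deg]] := degree_function_root cr hdegD hdeg_shift (hdeg_nontrivial Dnt).
have [rin _ _] := root.
have [m1 [m1S m1r]] := dual_pt_pairing_one cr rin.
have dm1 : hdeg m1 = 1%N by apply/eqP; rewrite -eqz_nat -pair_deg // m1r.
set lam := hcoef 1 m1.
have Fm1 : genpoly m1 = 1 + lam%:P * 'X.
  apply/polyP => i; rewrite genpolyE coefD coef1 coefCM coefX.
  case: i => [|[|i]]; rewrite ?hcoef0 ?mulr0 ?addr0 ?mulr1 ?add0r //.
  by rewrite hcoef_gt_hdeg ?dm1.
have [w [wrho wpos]] := face_functional cr rin.
have wS := face_functional_dual rin wrho wpos.
have dw : hdeg w = 0%N by apply/eqP; rewrite -eqz_nat -pair_deg // wrho.
exists rho, lam; split => //; first by rewrite /lam -dm1 hdeg_lead.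
move=> i m mS; set a := hdeg m.
(* complement m to a multiple of m1 inside the face of rho, where F = 1 *)
have [N xS] : exists N, S ((m1 *+ a - m) + w *+ N).
  apply: (shift_into_dual cr wpos); first by rewrite wrho.
  by rewrite pairingBl pairingMnl m1r pair_deg // /a -mulr_natr mul1r natz subrr.
have dx : hdeg ((m1 *+ a - m) + w *+ N) = 0%N.
  apply/eqP; rewrite -eqz_nat -pair_deg // pairingDl pairingBl !pairingMnl m1r wrho.
  by rewrite pair_deg // /a mul0rn addr0 -mulr_natr mul1r natz subrr.
have Fm : genpoly m = (1 + lam%:P * 'X) ^+ a.
  rewrite -[genpoly m]mulr1 -[X in _ * X = _](genpoly_deg0 xS dx) -genpolyM //.
  rewrite addrA [m + _]addrC subrK.
  by rewrite genpolyM ?dual_ptMn // !genpolyMn // Fm1 (genpoly_deg0 wS dw) expr1n mulr1.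
by rewrite hcoefE // -genpolyE Fm coef_binomial pair_deg.
Qed.

End Forward.

Lemma sum_collect (k : fieldType) (V : lmodType k) (T : eqType) (s t : seq T)
    (c : T -> k) (f : T -> V) :
  uniq t -> {subset s <= t} ->
  \sum_(m <- s) c m *: f m = \sum_(m <- t) (c m *+ count_mem m s) *: f m.
Proof.
move=> ut; elim: s => [|x s IH] sub.
  by rewrite big_nil big1 // => m _; rewrite mulr0n scale0r.
rewrite big_cons IH => [|y ys]; last by apply: sub; rewrite in_cons ys orbT.
under [in RHS]eq_bigr do rewrite /= mulrnDr scalerDl.
rewrite big_split /=; congr (_ + _).
rewrite (bigD1_seq x) ?sub ?mem_head //= eqxx mulr1n big1 ?addr0 // => m /negbTE.
by rewrite eq_sym => ->; rewrite mulr0n scale0r.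
Qed.

Section LinearExtension.
Variables (k : fieldType) (n : nat) (rays : seq 'rV[int]_n) (A : comAlgType k)
  (chi : 'rV[int]_n -> A).
Hypothesis SA : semigroup_algebra rays chi.

Local Notation S := (dual_pt rays).

Lemma expansion_ex (x : A) : exists sc : seq 'rV[int]_n * ('rV[int]_n -> k),
  all S sc.1 /\ x = \sum_(m <- sc.1) sc.2 m *: chi m.
Proof. by case: SA => _ _ span _; have [s [c [h1 h2]]] := span x; exists (s, c). Qed.

Definition expansion x := proj1_sig (constructive_indefinite_description _ (expansion_ex x)).

Lemma expansion_dual x : all S (expansion x).1.
Proof. exact: (proj1 (proj2_sig (constructive_indefinite_description _ (expansion_ex x)))). Qed.

Lemma expansionE x : x = \sum_(m <- (expansion x).1) (expansion x).2 m *: chi m.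
Proof. exact: (proj2 (proj2_sig (constructive_indefinite_description _ (expansion_ex x)))). Qed.

Lemma expansion_unique (s s' : seq 'rV[int]_n) (c c' : 'rV[int]_n -> k)
    (V : lmodType k) (f : 'rV[int]_n -> V) :
  all S s -> all S s' ->
  \sum_(m <- s) c m *: chi m = \sum_(m <- s') c' m *: chi m ->
  \sum_(m <- s) c m *: f m = \sum_(m <- s') c' m *: f m.
Proof.
move=> sS s'S eq_chi; set t := undup (s ++ s'); have ut : uniq t := undup_uniq _.
have sub1 : {subset s <= t} by move=> x xs; rewrite mem_undup mem_cat xs.
have sub2 : {subset s' <= t} by move=> x xs; rewrite mem_undup mem_cat xs orbT.
have tS : all S t.
  by apply/allP => x; rewrite mem_undup mem_cat => /orP [] ?; [exact: (allP sS)|exact: (allP s'S)].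
pose d m := c m *+ count_mem m s - c' m *+ count_mem m s'.
have d0 : forall m, m \in t -> d m = 0.
  have [_ _ _ indep] := SA; apply: indep => //.
  under eq_bigr do rewrite scalerBl.
  by rewrite sumrB -(sum_collect _ _ ut sub1) -(sum_collect _ _ ut sub2) eq_chi subrr.
rewrite (sum_collect _ _ ut sub1) (sum_collect _ _ ut sub2).
apply: eq_big_seq => m /d0 /eqP.
by rewrite subr_eq0 => /eqP ->.
Qed.

Definition lin_ext (V : lmodType k) (f : 'rV[int]_n -> V) (x : A) : V :=
  \sum_(m <- (expansion x).1) (expansion x).2 m *: f m.

Section Extension.
Variables (V : lmodType k) (f : 'rV[int]_n -> V).

Lemma lin_ext_sum (s : seq 'rV[int]_n) (c : 'rV[int]_n -> k) : all S s ->
  lin_ext f (\sum_(m <- s) c m *: chi m) = \sum_(m <- s) c m *: f m.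
Proof. by move=> sS; apply: expansion_unique => //; rewrite ?expansion_dual -?expansionE. Qed.

Lemma lin_ext_chi m : S m -> lin_ext f (chi m) = f m.
Proof.
by move=> mS; have := @lin_ext_sum [:: m] (fun _ => 1); rewrite /= mS !big_seq1 !scale1r; apply.
Qed.

Lemma lin_extP (a : k) x y : lin_ext f (a *: x + y) = a *: lin_ext f x + lin_ext f y.
Proof.
set s1 := (expansion x).1; set c1 := (expansion x).2.
set s2 := (expansion y).1; set c2 := (expansion y).2.
set t := undup (s1 ++ s2); have ut : uniq t := undup_uniq _.
have sub1 : {subset s1 <= t} by move=> z zs; rewrite mem_undup mem_cat zs.
have sub2 : {subset s2 <= t} by move=> z zs; rewrite mem_undup mem_cat zs orbT.
have tS : all S t.
  apply/allP => z; rewrite mem_undup mem_cat => /orP [] ?.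
    exact: (allP (expansion_dual x)).
  exact: (allP (expansion_dual y)).
pose C m := a * (c1 m *+ count_mem m s1) + c2 m *+ count_mem m s2.
have comb (W : lmodType k) (g : 'rV[int]_n -> W) :
    a *: \sum_(m <- s1) c1 m *: g m + \sum_(m <- s2) c2 m *: g m = \sum_(m <- t) C m *: g m.
  rewrite (sum_collect _ _ ut sub1) (sum_collect _ _ ut sub2) scaler_sumr -big_split /=.
  by apply: eq_bigr => m _; rewrite scalerA scalerDl.
by rewrite {1}(expansionE x) {1}(expansionE y) comb lin_ext_sum // -comb.
Qed.

Lemma lin_ext0 : lin_ext f 0 = 0.
Proof.
have := lin_extP 1 0 0; rewrite !scale1r addr0 => h.
by apply: (@addrI _ (lin_ext f 0)); rewrite -h addr0.
Qed.

Lemma lin_extZ a x : lin_ext f (a *: x) = a *: lin_ext f x.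
Proof. by have := lin_extP a x 0; rewrite !addr0 lin_ext0 addr0. Qed.

Lemma lin_ext_big (I : Type) (s : seq I) (F : I -> A) :
  lin_ext f (\sum_(x <- s) F x) = \sum_(x <- s) lin_ext f (F x).
Proof.
elim: s => [|x s IH]; first by rewrite !big_nil lin_ext0.
by rewrite !big_cons -IH -[lin_ext f (F x)]scale1r -lin_extP scale1r.
Qed.

End Extension.
End LinearExtension.

(* C(a, j) C(a - j, i) = C(a, i + j) C(i + j, i): both count the ways of
   choosing disjoint subsets of sizes j and i of an a-set. *)
Lemma binomial_split (a i j : nat) : (j <= a)%N ->
  ('C(a, j) * 'C(a - j, i) = 'C(a, i + j) * 'C(i + j, i))%N.
Proof.
move=> ja; case: (leqP (i + j) a) => ija; last first.
  by rewrite (@bin_small (a - j) i) ?(@bin_small a (i + j)) ?muln0 ?mul0n //; lia.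
have f1 := bin_fact ja.
have f2 : ('C(a - j, i) * (i`! * (a - (i + j))`!))%N = (a - j)`!.
  by rewrite -(_ : (a - j - i = a - (i + j))%N); [apply: bin_fact | ]; lia.
have f3 := bin_fact ija.
have f4 : ('C(i + j, i) * (i`! * j`!))%N = (i + j)`!.
  by rewrite -{2}(_ : (i + j - i = j)%N) ?bin_fact //; lia.
apply/eqP; rewrite -(eqn_pmul2r (fact_gt0 (a - (i + j)))) -(eqn_pmul2r (fact_gt0 i)).
rewrite -(eqn_pmul2r (fact_gt0 j)); apply/eqP.
transitivity ('C(a, j) * (j`! * (a - j)`!))%N; first by rewrite -f2; ring.
by rewrite f1 -f3 -f4; ring.
Qed.

(* Leibniz's
   rule on the basis is Vandermonde's identity, iterativity is binomial_split,
   and chi^(m + i e) is only needed when i <= <m, rho>, where m + i e stays in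
   sigma^vee because e is a Demazure root. *)
Section Converse.
Variables (k : fieldType) (n : nat) (rays : seq 'rV[int]_n) (A : comAlgType k)
  (chi : 'rV[int]_n -> A).
Hypothesis cr : cone_rays rays.
Hypothesis SA : semigroup_algebra rays chi.
Variables (e rho : 'rV[int]_n) (lam : k).
Hypothesis root : demazure_root rays e rho.
Hypothesis lam_neq0 : lam != 0.

Local Notation S := (dual_pt rays).

Definition ccoef i m : k := lam ^+ i * ('C(absz (pairing m rho), i))%:R.

Definition cterm i m : A := if S m then ccoef i m *: chi (m + e *+ i) else 0.

Lemma rho_pairing_ge0 m : S m -> 0 <= pairing m rho.
Proof. by case: root => rin _ _ /allP /(_ rho rin). Qed.

Lemma root_shift_dual m j : S m -> (j <= absz (pairing m rho))%N -> S (m + e *+ j).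
Proof.
case: root => rin erho epos mS hj; apply/allP => r rin' /=.
rewrite pairingDl pairingMnl -mulr_natr natz.
have := allP mS r rin' => /= mr.
case: (r =P rho) => [-> | /eqP ne]; last by have := epos r rin' ne; nia.
by move: hj; rewrite erho -lez_nat gez0_abs ?rho_pairing_ge0 //; lia.
Qed.

Lemma absz_shift m j : S m -> (j <= absz (pairing m rho))%N ->
  absz (pairing (m + e *+ j) rho) = (absz (pairing m rho) - j)%N.
Proof.
case: root => _ erho _ mS hj; have mr := rho_pairing_ge0 mS.
rewrite pairingDl pairingMnl erho -mulr_natr natz mulN1r.
move: hj; rewrite -lez_nat gez0_abs // => hj.
by apply/eqP; rewrite -eqz_nat gez0_abs ?subr_ge0 // -subzn ?gez0_abs // -lez_nat gez0_abs.
Qed.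

Lemma ccoef_small i m : S m -> (absz (pairing m rho) < i)%N -> ccoef i m = 0.
Proof. by move=> mS h; rewrite /ccoef bin_small // mulr0. Qed.

Lemma cterm_small i m : S m -> (absz (pairing m rho) < i)%N -> cterm i m = 0.
Proof. by move=> mS h; rewrite /cterm mS ccoef_small // scale0r. Qed.

Lemma cterm0 m : S m -> cterm 0 m = chi m.
Proof. by move=> mS; rewrite /cterm mS /ccoef expr0 bin0 mul1r scale1r mulr0n addr0. Qed.

(* Leibniz's rule on the basis: Vandermonde's identity. *)
Lemma ctermD i m m' : S m -> S m' ->
  cterm i (m + m') = \sum_(j < i.+1) cterm j m * cterm (i - j) m'.
Proof.
move=> mS m'S; have [_ chiM _ _] := SA.
set a := absz (pairing m rho); set b := absz (pairing m' rho).
have ab : absz (pairing (m + m') rho) = (a + b)%N.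
  apply/eqP; rewrite -eqz_nat pairingDl PoszD /a /b !gez0_abs ?addr_ge0 ?rho_pairing_ge0 //.
rewrite /cterm dual_ptD // mS m'S /ccoef ab -binomial.Vandermonde natr_sum mulr_sumr scaler_suml.
apply: eq_bigr => j _; have ji : (j <= i)%N by rewrite -ltnS ltn_ord.
rewrite -scalerAl -scalerAr scalerA natrM mulrACA -exprD subnKC //.
case: (leqP j a) => hj; last by rewrite (bin_small hj) mul0r mulr0 !scale0r.
case: (leqP (i - j) b) => hij; last by rewrite (bin_small hij) mulr0 mulr0 !scale0r.
by rewrite -chiM ?root_shift_dual // addrACA -mulrnDr subnKC.
Qed.

Definition cHD i : A -> A := lin_ext SA (cterm i).

Lemma cHD_chi i m : S m -> cHD i (chi m) = cterm i m.
Proof. exact: lin_ext_chi. Qed.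

Lemma cHD_cterm i j m : S m -> cHD i (cterm j m) = cterm (i + j) m *+ 'C(i + j, i).
Proof.
move=> mS; set a := absz (pairing m rho).
case: (leqP j a) => hj; last first.
  rewrite !cterm_small ?mul0rn /cHD ?lin_ext0 //.
  exact: leq_trans hj (leq_addl _ _).
have shiftS := root_shift_dual mS hj.
rewrite {1}/cterm mS /cHD lin_extZ lin_ext_chi // /cterm shiftS mS.
rewrite scalerA -addrA -mulrnDr [(j + i)%N]addnC scalerMnl; congr (_ *: _).
rewrite /ccoef absz_shift // -/a -[in RHS]mulr_natr exprD.
transitivity (lam ^+ i * lam ^+ j * ('C(a, j)%:R * 'C(a - j, i)%:R)); first by ring.
by rewrite -!natrM binomial_split // natrM mulrA.
Qed.

(* Leibniz's rule follows from the basis case by bilinearity. *)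
Lemma cHD_leibniz i (f g : A) :
  cHD i (f * g) = \sum_(j < i.+1) cHD j f * cHD (i - j) g.
Proof.
set s1 := (expansion SA f).1; set c1 := (expansion SA f).2.
set s2 := (expansion SA g).1; set c2 := (expansion SA g).2.
have s1S := expansion_dual SA f; have s2S := expansion_dual SA g.
have [_ chiM _ _] := SA.
have fg : f * g = \sum_(m <- s1) \sum_(m' <- s2) (c1 m * c2 m') *: chi (m + m').
  rewrite {1}(expansionE SA f) {1}(expansionE SA g) mulr_suml; apply: eq_big_seq => m ms.
  rewrite mulr_sumr; apply: eq_big_seq => m' m's.
  by rewrite -scalerAl -scalerAr scalerA chiM ?(allP s1S m ms) ?(allP s2S m' m's).
rewrite fg /cHD lin_ext_big.
under eq_big_seq => m ms.
  rewrite lin_ext_big.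
  under eq_big_seq => m' m's.
    rewrite lin_extZ lin_ext_chi ?dual_ptD ?(allP s1S m ms) ?(allP s2S m' m's) //.
    rewrite ctermD ?(allP s1S m ms) ?(allP s2S m' m's) // scaler_sumr.
  over.
  rewrite exchange_big.
over.
rewrite exchange_big; apply: eq_bigr => j _ /=.
rewrite /lin_ext -/s1 -/c1 -/s2 -/c2 mulr_suml; apply: eq_bigr => m _.
rewrite mulr_sumr; apply: eq_bigr => m' _.
by rewrite -scalerAl -scalerAr scalerA.
Qed.

Lemma cHD_LFIHD : LFIHD cHD.
Proof.
split.
- by move=> i; exact: lin_extP.
- move=> x; rewrite /cHD /lin_ext [in RHS](expansionE SA x); apply: eq_big_seq => m ms.
  by rewrite cterm0 // (allP (expansion_dual SA x)).
- exact: cHD_leibniz.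
- move=> x; exists (\sum_(m <- (expansion SA x).1) (absz (pairing m rho)).+1)%N => i hi.
  rewrite /cHD /lin_ext big1_seq // => m /= ms.
  rewrite cterm_small ?scaler0 ?(allP (expansion_dual SA x)) //.
  by apply: leq_trans hi; rewrite (big_rem m ms) /= leq_addr.
- move=> i j f.
  have -> : cHD j f = \sum_(m <- (expansion SA f).1) (expansion SA f).2 m *: cterm j m by [].
  rewrite /cHD lin_ext_big {2}/lin_ext -sumrMnl.
  apply: eq_big_seq => m ms; have mS := allP (expansion_dual SA f) m ms.
  by rewrite lin_extZ -/(cHD i _) cHD_cterm // scalerMnr.
Qed.

(* It is nontrivial: D 1 chi^m1 = lam chi^(m1 + e) for <m1, rho> = 1. *)
Lemma cHD_nontrivial : nontrivial_HD cHD.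
Proof.
have [rin _ _] := root; have [m1 [m1S m1r]] := dual_pt_pairing_one cr rin.
exists 1%N, (chi m1); split => //.
rewrite cHD_chi // /cterm m1S /ccoef m1r /= bin1 mulr1 expr1.
apply/eqP => /(scale_chi_eq0 SA) lam0; move: lam_neq0; rewrite lam0 ?eqxx //.
by apply: root_shift_dual => //; rewrite m1r.
Qed.

Lemma cHD_homogeneous : homogeneous rays chi cHD e.
Proof.
move=> i m x; rewrite /graded_piece.
case: (boolP (S m)) => mS; last first.
  by move=> ->; rewrite /cHD lin_ext0; case: ifP => // _; exists 0; rewrite scale0r.
case=> c ->; rewrite /cHD lin_extZ lin_ext_chi // /cterm mS scalerA.
case: ifP => shiftS; first by exists (c * ccoef i m).
case: (leqP i (absz (pairing m rho))) => hi; first by rewrite root_shift_dual in shiftS.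
by rewrite ccoef_small // mulr0 scale0r.
Qed.

Lemma cHD_formula i m : S m -> cHD i (chi m) = ccoef i m *: chi (m + e *+ i).
Proof. by move=> mS; rewrite cHD_chi // /cterm mS. Qed.

End Converse.

Unset Implicit Arguments.

Theorem theorem5p4p5 (k : fieldType) (n : nat) (rays : seq 'rV[int]_n)
    (A : comAlgType k) (chi : 'rV[int]_n -> A) :
  cone_rays rays -> semigroup_algebra rays chi ->
  (forall D : nat -> A -> A,
      LFIHD D -> nontrivial_HD D -> (exists e0, homogeneous rays chi D e0) ->
      exists (e rho : 'rV[int]_n) (lam : k),
        [/\ demazure_root rays e rho, lam != 0
          & forall (i : nat) (m : 'rV[int]_n), dual_pt rays m ->
              D i (chi m) = (lam ^+ i * ('C(absz (pairing m rho), i))%:R) *: chi (m + e *+ i)])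
  /\
  (forall (e rho : 'rV[int]_n) (lam : k),
      demazure_root rays e rho -> lam != 0 ->
      exists D : nat -> A -> A,
        [/\ LFIHD D, nontrivial_HD D, homogeneous rays chi D e
          & forall (i : nat) (m : 'rV[int]_n), dual_pt rays m ->
              D i (chi m) = (lam ^+ i * ('C(absz (pairing m rho), i))%:R) *: chi (m + e *+ i)]).
Proof.
move=> cr SA; split.
  move=> D HD Dnt [e He].
  have [rho [lam form]] := homogeneous_LFIHD_form cr SA HD He Dnt.
  by exists e, rho, lam.
move=> e rho lam root lam_neq0.
exists (cHD SA e rho lam); split.
- exact: cHD_LFIHD.
- exact: cHD_nontrivial.
- exact: cHD_homogeneous.
- exact: cHD_formula.
Qed.
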